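(* For all integers $v\geq 1$ and $r\geq 1$, $$\sum_{i=1}^{2v-2}2^{i-1}\binom{2r+i-1}{i}\sigma(2v-i,2r+i)+2^{2v-1}\sum_{j=0}^{2r-2}(-1)^j\binom{2v+j-1}{j}\lambda(2v+j)\lambda(2r-j)$$ $$-2^{2v-3}\binom{2v+2r-2}{2v-1}(2v+2r-1)\lambda(2v+2r)+2^{2v-2}\binom{2v+2r-2}{2v-1}\sum_{j=1}^{r+v-2}\lambda(2j+1)\lambda(2r+2v-2j-1)=0,$$ where an empty sum equals $0$.
   Context: For integers $t\geq 1$, $n\geq 1$ let $S_n^{(t)}=\sum_{k=1}^{n}\frac{1}{(2k-1)^t}$, and for integers $s\geq 2$, $t\geq 1$ let $\sigma(s,t)=\sum_{n\geq 1}\frac{S_n^{(t)}}{n^s}$. For real $s>1$, $\lambda(s)=\sum_{n\geq 1}\frac{1}{(2n-1)^s}$. *)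

From Stdlib Require Import Reals.
From Coquelicot Require Import Coquelicot.
Open Scope R_scope.

Definition S_odd (t n : nat) : R :=
  sum_n_m (fun k : nat => / (INR (2 * k - 1)) ^ t) 1 n.

Definition sigma_st (s t : nat) : R :=
  Series (fun m : nat => S_odd t (S m) / (INR (S m)) ^ s).

Definition lambda_d (s : nat) : R :=
  Series (fun m : nat => / (INR (2 * m + 1)) ^ s).

(* real binomial coefficient n choose k (Stdlib Reals.Binomial.C; Coquelicot's C is the complex type) *)
Definition binom (n k : nat) : R := Stdlib.Reals.Binomial.C n k.

From Stdlib Require Import Reals ZArith Lia Lra.
From Coquelicot Require Import Coquelicot.
Open Scope R_scope.

(* Everything comes from the partial-fraction expansion of [1 / (x^(p+1) (x+y)^(q+1))] in [x] and
   [y], whose coefficients are those of the problem of points. Put [x = 2k+1], [y = 2l+1] and sum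
   over [k, l < M]: the left-hand side is a truncation of [sigma(q+1, p+1) / 2^(q+1)], and the
   right-hand side consists of products of truncated lambda values, further truncated sigma values
   and, after symmetrising in [k] and [l], an alternating sum of lambda products. Letting [M] tend
   to infinity gives a linear relation. In the alternating sum, the products of lambda values at
   even arguments are summed by the identity
   [sum_(j <= n) lambda(2j+2) lambda(2n+2-2j) = (n + 3/2) lambda(2n+4)], proved in the same way
   from partial fractions in [x^2]; there the telescoping remainders are tails of harmonic sums,
   which vanish in the limit. *)

(** * Finite sums *)

Fixpoint fsum (f : nat -> R) (n : nat) : R :=
  match n with O => 0 | S n => fsum f n + f n end.

Lemma fsum_Sr f n : fsum f (S n) = fsum f n + f n.
Proof. reflexivity. Qed.

Lemma fsum_ext f g n : (forall k, (k < n)%nat -> f k = g k) -> fsum f n = fsum g n.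
Proof.
  induction n; intros H; simpl; auto.
  rewrite IHn, H by first [lia | intros; apply H; lia]. reflexivity.
Qed.

Lemma fsum_plus f g n : fsum (fun k => f k + g k) n = fsum f n + fsum g n.
Proof. induction n; simpl; [lra|rewrite IHn; lra]. Qed.

Lemma fsum_minus f g n : fsum (fun k => f k - g k) n = fsum f n - fsum g n.
Proof. induction n; simpl; [lra|rewrite IHn; lra]. Qed.

Lemma fsum_scal c f n : fsum (fun k => c * f k) n = c * fsum f n.
Proof. induction n; simpl; [lra|rewrite IHn; lra]. Qed.

Lemma fsum_const c n : fsum (fun _ => c) n = INR n * c.
Proof. induction n; [simpl; ring|]. rewrite fsum_Sr, IHn, S_INR. ring. Qed.

Lemma fsum_zero n : fsum (fun _ => 0) n = 0.
Proof. rewrite fsum_const. ring. Qed.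

Lemma fsum_le f g n : (forall k, (k < n)%nat -> f k <= g k) -> fsum f n <= fsum g n.
Proof.
  induction n; intros H; simpl; [lra|].
  assert (fsum f n <= fsum g n) by (apply IHn; intros; apply H; lia).
  assert (f n <= g n) by (apply H; lia). lra.
Qed.

Lemma fsum_nonneg f n : (forall k, 0 <= f k) -> 0 <= fsum f n.
Proof. intros H; induction n; simpl; [lra|specialize (H n); lra]. Qed.

Lemma fsum_le_len f n m : (forall k, 0 <= f k) -> (n <= m)%nat -> fsum f n <= fsum f m.
Proof. intros H Hnm; induction Hnm; [lra|simpl; specialize (H m); lra]. Qed.

Lemma fsum_add_len f n m : fsum f (n + m) = fsum f n + fsum (fun k => f (n + k)%nat) m.
Proof.
  induction m; simpl; [rewrite Nat.add_0_r; lra|].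
  rewrite Nat.add_succ_r; simpl; rewrite IHm; lra.
Qed.

Lemma fsum_Sl f n : fsum f (S n) = f O + fsum (fun k => f (S k)) n.
Proof. induction n; simpl in *; [lra|rewrite IHn; lra]. Qed.

Lemma fsum_rev f n : fsum (fun k => f (n - 1 - k)%nat) n = fsum f n.
Proof.
  induction n; auto.
  rewrite fsum_Sl, fsum_Sr, <- IHn, Nat.sub_0_r, Nat.sub_succ, Nat.sub_0_r, Rplus_comm.
  f_equal. apply fsum_ext; intros. f_equal. lia.
Qed.

Lemma fsum_swap (f : nat -> nat -> R) n m :
  fsum (fun k => fsum (f k) m) n = fsum (fun l => fsum (fun k => f k l) n) m.
Proof.
  induction n; simpl.
  - rewrite fsum_zero; auto.
  - rewrite IHn, <- fsum_plus; auto.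
Qed.

Lemma fsum_mul f g n m : fsum f n * fsum g m = fsum (fun k => fsum (fun l => f k * g l) m) n.
Proof. induction n; simpl; [lra|]. rewrite <- IHn, fsum_scal. lra. Qed.

Lemma fsum_antidiag (f : nat -> nat -> R) M :
  fsum (fun k => fsum (f k) (M - k)) M = fsum (fun n => fsum (fun k => f k (n - k)%nat) (S n)) M.
Proof.
  induction M; auto.
  rewrite (fsum_Sr (fun n => fsum (fun k => f k (n - k)%nat) (S n))), <- IHM.
  rewrite (fsum_Sr (fun k => fsum (f k) (S M - k))), (fsum_Sr (fun k => f k (M - k)%nat)), Nat.sub_diag.
  replace (fsum (fun k => fsum (f k) (S M - k)) M)
    with (fsum (fun k => fsum (f k) (M - k) + f k (M - k)%nat) M).
  - rewrite fsum_plus. replace (S M - M)%nat with 1%nat by lia. simpl. lra.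
  - apply fsum_ext; intros k Hk. rewrite Nat.sub_succ_l by lia. auto.
Qed.

Lemma fsum_indicator l M c : (l < M)%nat -> fsum (fun k => if Nat.eq_dec k l then c else 0) M = c.
Proof.
  intros H. replace M with (l + 1 + (M - 1 - l))%nat by lia.
  rewrite !fsum_add_len. simpl.
  rewrite (fsum_ext _ (fun _ => 0)), fsum_zero, (fsum_ext _ (fun _ => 0) (M - 1 - l)), fsum_zero.
  - destruct (Nat.eq_dec (l + 0) l); [lra|lia].
  - intros k _. destruct (Nat.eq_dec (l + 1 + k) l); [lia|auto].
  - intros k Hk. destruct (Nat.eq_dec k l); [lia|auto].
Qed.

Lemma fsum_alternating f N :
  fsum (fun j => (-1) ^ j * f j) (S (2 * N)) =
  fsum (fun k => f (2 * k)%nat) (S N) - fsum (fun k => f (2 * k + 1)%nat) N.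
Proof.
  induction N; [simpl; ring|].
  replace (S (2 * S N)) with (S (S (S (2 * N)))) by lia.
  rewrite (fsum_Sr _ (S (S (2 * N)))), (fsum_Sr _ (S (2 * N))), IHN.
  rewrite (fsum_Sr (fun k => f (2 * k)%nat) (S N)), (fsum_Sr (fun k => f (2 * k + 1)%nat) N), pow_1_odd.
  replace (S (S (2 * N))) with (2 * S N)%nat by lia.
  rewrite pow_1_even. replace (S (2 * N)) with (2 * N + 1)%nat by lia. ring.
Qed.

Lemma fsum_pow_diff u t n : (t - u) * fsum (fun j => u ^ j * t ^ (n - j)) (S n) = t ^ S n - u ^ S n.
Proof.
  induction n; [simpl; ring|].
  rewrite fsum_Sr, Nat.sub_diag.
  replace (fsum (fun j => u ^ j * t ^ (S n - j)) (S n)) with (t * fsum (fun j => u ^ j * t ^ (n - j)) (S n)).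
  - transitivity (t * ((t - u) * fsum (fun j => u ^ j * t ^ (n - j)) (S n)) + (t - u) * u ^ S n);
      [simpl; ring|rewrite IHn; simpl; ring].
  - rewrite <- fsum_scal. apply fsum_ext; intros j Hj. rewrite Nat.sub_succ_l by lia. simpl. ring.
Qed.

Lemma fsum_geom s n : (1 - s) * fsum (fun i => s ^ i) (S n) = 1 - s ^ S n.
Proof.
  rewrite <- (pow1 (S n)) at 2. rewrite <- fsum_pow_diff.
  f_equal. apply fsum_ext; intros. rewrite pow1. ring.
Qed.

Definition dsum (M : nat) (f : nat -> nat -> R) : R := fsum (fun k => fsum (f k) M) M.

Lemma dsum_ext M f g : (forall k l, f k l = g k l) -> dsum M f = dsum M g.
Proof. intros H. apply fsum_ext; intros; apply fsum_ext; intros; auto. Qed.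

Lemma dsum_plus M f g : dsum M (fun k l => f k l + g k l) = dsum M f + dsum M g.
Proof. unfold dsum. rewrite <- fsum_plus. apply fsum_ext; intros; apply fsum_plus. Qed.

Lemma dsum_minus M f g : dsum M (fun k l => f k l - g k l) = dsum M f - dsum M g.
Proof. unfold dsum. rewrite <- fsum_minus. apply fsum_ext; intros; apply fsum_minus. Qed.

Lemma dsum_scal M c f : dsum M (fun k l => c * f k l) = c * dsum M f.
Proof. unfold dsum. rewrite <- fsum_scal. apply fsum_ext; intros; apply fsum_scal. Qed.

Lemma dsum_fsum M J (F : nat -> nat -> nat -> R) :
  dsum M (fun k l => fsum (fun j => F j k l) J) = fsum (fun j => dsum M (F j)) J.
Proof.
  induction J as [|J IHJ]; simpl.
  - transitivity (fsum (fun _ => 0) M); [|apply fsum_zero].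
    apply fsum_ext; intros. apply fsum_zero.
  - rewrite <- IHJ. apply dsum_plus.
Qed.

Lemma dsum_swap M f : dsum M (fun k l => f l k) = dsum M f.
Proof. unfold dsum. rewrite fsum_swap. auto. Qed.

Lemma dsum_mul M f g : dsum M (fun k l => f k * g l) = fsum f M * fsum g M.
Proof. rewrite fsum_mul. reflexivity. Qed.

Lemma sum_n_m_fsum (a : nat -> R) lo hi :
  sum_n_m a lo hi = fsum (fun k => a (lo + k)%nat) (S hi - lo).
Proof.
  destruct (le_lt_dec lo hi) as [H|H].
  - induction H as [|m H IHle].
    + rewrite sum_n_n, Nat.sub_succ_l, Nat.sub_diag by lia. simpl. rewrite Nat.add_0_r.
      unfold plus, zero; simpl; lra.
    + rewrite sum_n_Sm, IHle by lia.
      replace (S (S m) - lo)%nat with (S (S m - lo)) by lia.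
      rewrite fsum_Sr. replace (lo + (S m - lo))%nat with (S m) by lia. auto.
  - rewrite (sum_n_m_zero a) by lia. replace (S hi - lo)%nat with O by lia. auto.
Qed.

Lemma Series_fsum_lim (a : nat -> R) (l : R) : is_lim_seq (fsum a) l -> Series a = l.
Proof.
  intros H. unfold Series. rewrite (is_lim_seq_unique _ l); auto.
  apply is_lim_seq_ext with (fun n => fsum a (S n)).
  - intros n. unfold sum_n. rewrite sum_n_m_fsum, Nat.sub_0_r. auto.
  - apply (is_lim_seq_incr_1 (fsum a)); auto.
Qed.

Lemma is_lim_seq_fsum (F : nat -> nat -> R) (L : nat -> R) n :
  (forall k, (k < n)%nat -> is_lim_seq (F k) (L k)) ->
  is_lim_seq (fun M => fsum (fun k => F k M) n) (fsum L n).
Proof.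
  induction n; intros H; simpl.
  - apply is_lim_seq_const.
  - apply (is_lim_seq_plus' _ _ (fsum L n) (L n)); [apply IHn; intros|]; apply H; lia.
Qed.

Lemma is_lim_seq_ext_eq (u v : nat -> R) (l1 l2 : R) :
  (forall n, u n = v n) -> is_lim_seq u l1 -> is_lim_seq v l2 -> l1 = l2.
Proof.
  intros E H1 H2. apply is_lim_seq_unique in H1. apply is_lim_seq_unique in H2.
  rewrite (Lim_seq_ext _ _ E), H2 in H1. now injection H1.
Qed.

Lemma is_lim_seq_scal_l' (u : nat -> R) (c l : R) :
  is_lim_seq u l -> is_lim_seq (fun n => c * u n) (c * l).
Proof. intros H. apply is_lim_seq_mult'; [apply is_lim_seq_const|exact H]. Qed.

(** * Binomial coefficients and partial fractions *)

(* Unlike [Binomial.C], [choose n k] vanishes for [k > n]. *)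
Fixpoint choose (n k : nat) : nat :=
  match n, k with
  | _, O => 1%nat
  | O, S _ => O
  | S n', S k' => (choose n' k' + choose n' (S k'))%nat
  end.

Lemma choose_n_0 n : choose n 0 = 1%nat.
Proof. destruct n; auto. Qed.

Lemma choose_SS n k : choose (S n) (S k) = (choose n k + choose n (S k))%nat.
Proof. reflexivity. Qed.

Lemma choose_gt n k : (n < k)%nat -> choose n k = O.
Proof.
  revert k; induction n; intros k H; destruct k; simpl; try lia; auto.
  rewrite !IHn by lia. auto.
Qed.

Lemma choose_n_n n : choose n n = 1%nat.
Proof. induction n; auto. simpl. rewrite IHn, choose_gt by lia. auto. Qed.

Lemma choose_sym a b : choose (a + b) a = choose (a + b) b.
Proof.
  revert b; induction a; intros b.
  - simpl. rewrite choose_n_0, choose_n_n. auto.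
  - induction b.
    + rewrite Nat.add_0_r, choose_n_n, choose_n_0. auto.
    + replace (S a + S b)%nat with (S (a + S b)) by lia.
      rewrite !choose_SS.
      assert (E : choose (a + S b) (S a) = choose (a + S b) b).
      { replace (a + S b)%nat with (S a + b)%nat by lia. exact IHb. }
      rewrite IHa, E. lia.
Qed.

Lemma C_choose n k : (k <= n)%nat -> Binomial.C n k = INR (choose n k).
Proof.
  revert k; induction n; intros k H.
  - destruct k; [|lia]. rewrite C_n_0. simpl; auto.
  - destruct k. { rewrite C_n_0, choose_n_0; simpl; auto. }
    rewrite choose_SS, plus_INR.
    destruct (Nat.eq_dec k n) as [->|Hk].
    + rewrite C_n_n, choose_n_n, (choose_gt n (S n)) by lia. simpl; lra.
    + rewrite <- pascal, !IHn by lia. auto.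
Qed.

Lemma points_step s t p : s + t = 1 -> forall n,
  s ^ n * INR (choose (n + p) (S p)) + t * fsum (fun i => INR (choose (S p + i) i) * s ^ i) n
  - fsum (fun i => INR (choose (p + i) i) * s ^ i) n = 0.
Proof.
  intros Hst n. induction n.
  - simpl. rewrite choose_gt by lia. simpl. lra.
  - rewrite !fsum_Sr.
    assert (E : INR (choose (S p + n) n) = INR (choose (n + p) (S p)) + INR (choose (p + n) n)).
    { rewrite <- plus_INR. f_equal. destruct n.
      - rewrite Nat.add_0_r, Nat.add_0_l, !choose_n_0, choose_gt by lia. auto.
      - replace (S p + S n)%nat with (S (p + S n)) by lia. rewrite choose_SS.
        replace (S n + p)%nat with (S p + n)%nat by lia.
        rewrite choose_sym. replace (p + S n)%nat with (S p + n)%nat by lia. lia. }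
    replace (S n + p)%nat with (S p + n)%nat by lia.
    rewrite (choose_sym (S p) n), E, <- IHn.
    replace t with (1 - s) by lra. simpl pow. ring.
Qed.

(* The problem of points: if [s + t = 1], the chances that [q+1] successes (probability [s])
   occur before [p+1] failures and that [p+1] failures occur before [q+1] successes add up to 1. *)
Lemma problem_of_points s t p q : s + t = 1 ->
  s ^ (S q) * fsum (fun j => INR (choose (q + j) j) * t ^ j) (S p)
  + t ^ (S p) * fsum (fun i => INR (choose (p + i) i) * s ^ i) (S q) = 1.
Proof.
  intros Hst. induction p.
  - simpl fsum at 1. rewrite Nat.add_0_r, choose_n_0.
    rewrite (fsum_ext _ (fun i => s ^ i)).
    + replace t with (1 - s) by lra. rewrite pow_1, fsum_geom. simpl. lra.
    + intros. rewrite Nat.add_0_l, choose_n_n. simpl; lra.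
  - pose proof (f_equal (Rmult (t ^ S p)) (points_step s t p Hst (S q))) as G.
    rewrite Rmult_0_r in G.
    rewrite fsum_Sr. replace (q + S p)%nat with (S q + p)%nat by lia.
    replace (t ^ S (S p)) with (t * t ^ S p) by (simpl; ring).
    lra.
Qed.

Lemma pow_div_distr a b n : b <> 0 -> (a / b) ^ n = a ^ n / b ^ n.
Proof. intros Hb. unfold Rdiv. rewrite Rpow_mult_distr, pow_inv. auto. Qed.

Lemma partial_fraction_term_left x y z c P Q j : x <> 0 -> y <> 0 -> z <> 0 -> (j <= P)%nat ->
  / x ^ P * / z ^ Q * ((z / y) ^ Q * (c * (- x / y) ^ j)) =
  (-1) ^ j * c * / x ^ (P - j) * / y ^ (Q + j).
Proof.
  intros Hx Hy Hz Hj.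
  rewrite !pow_div_distr by lra.
  replace (- x) with (-1 * x) by ring. rewrite Rpow_mult_distr.
  replace (x ^ P) with (x ^ (P - j) * x ^ j) by (rewrite <- pow_add; f_equal; lia).
  rewrite pow_add.
  assert (x ^ (P - j) <> 0) by (apply pow_nonzero; lra).
  assert (x ^ j <> 0) by (apply pow_nonzero; lra).
  assert (y ^ Q <> 0) by (apply pow_nonzero; lra).
  assert (y ^ j <> 0) by (apply pow_nonzero; lra).
  assert (z ^ Q <> 0) by (apply pow_nonzero; lra).
  field; auto.
Qed.

Lemma partial_fraction_term_right x y z c P Q i : x <> 0 -> y <> 0 -> z <> 0 -> (i <= Q)%nat ->
  / x ^ P * / z ^ Q * ((- x / y) ^ P * (c * (z / y) ^ i)) =
  (-1) ^ P * c * / z ^ (Q - i) * / y ^ (P + i).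
Proof.
  intros Hx Hy Hz Hi.
  rewrite !pow_div_distr by lra.
  replace (- x) with (-1 * x) by ring. rewrite Rpow_mult_distr.
  replace (z ^ Q) with (z ^ (Q - i) * z ^ i) by (rewrite <- pow_add; f_equal; lia).
  rewrite pow_add.
  assert (z ^ (Q - i) <> 0) by (apply pow_nonzero; lra).
  assert (x ^ P <> 0) by (apply pow_nonzero; lra).
  assert (y ^ P <> 0) by (apply pow_nonzero; lra).
  assert (y ^ i <> 0) by (apply pow_nonzero; lra).
  assert (z ^ i <> 0) by (apply pow_nonzero; lra).
  field; auto.
Qed.

(* Multiply the left-hand side by the problem-of-points identity at [s = (x+y)/y], [t = -x/y]. *)
Lemma partial_fractions x y p q : x <> 0 -> y <> 0 -> x + y <> 0 ->
  / x ^ (S p) * / (x + y) ^ (S q) =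
  fsum (fun j => (-1) ^ j * INR (choose (q + j) j) * / x ^ (S p - j) * / y ^ (S q + j)) (S p)
  + (-1) ^ (S p) * fsum (fun i => INR (choose (p + i) i) * / (x + y) ^ (S q - i) * / y ^ (S p + i)) (S q).
Proof.
  intros Hx Hy Hxy.
  assert (Hst : (x + y) / y + - x / y = 1) by (field; lra).
  rewrite <- (Rmult_1_r (/ x ^ S p * / (x + y) ^ S q)), <- (problem_of_points _ _ p q Hst).
  rewrite Rmult_plus_distr_l. f_equal.
  - rewrite <- Rmult_assoc, <- fsum_scal. apply fsum_ext; intros j Hj.
    rewrite Rmult_assoc, partial_fraction_term_left by lia || lra. auto.
  - rewrite <- Rmult_assoc, <- !fsum_scal. apply fsum_ext; intros i Hi.
    rewrite Rmult_assoc, (partial_fraction_term_right x y (x + y)) by lia || lra. ring.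
Qed.

Lemma partial_fractions_odd x y a b : x <> 0 -> y <> 0 -> x + y <> 0 ->
  let p := S (2 * a) in let q := S (2 * b) in
  / x ^ (S p) * / (x + y) ^ (S q) =
  fsum (fun j => (-1) ^ j * INR (choose (q + j) j) * / x ^ (S p - j) * / y ^ (S q + j)) p
  + fsum (fun i => INR (choose (p + i) i) * / (x + y) ^ (S q - i) * / y ^ (S p + i)) q
  - INR (choose (p + q) q) * (/ x * / (x + y) * / y ^ (p + q)).
Proof.
  intros Hx Hy Hxy p q.
  rewrite (partial_fractions x y p q Hx Hy Hxy), !fsum_Sr.
  assert (Hp1 : (-1) ^ p = -1) by (unfold p; apply pow_1_odd).
  assert (Hp2 : (-1) ^ (S p) = 1) by (replace (S p) with (2 * S a)%nat by (unfold p; lia); apply pow_1_even).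
  rewrite Hp1, Hp2.
  replace (S p - p)%nat with 1%nat by lia.
  replace (S p + q)%nat with (S (p + q)) by lia.
  replace (S q + p)%nat with (S (p + q)) by lia.
  replace (S q - q)%nat with 1%nat by lia.
  replace (q + p)%nat with (p + q)%nat by lia.
  rewrite (choose_sym p q), !pow_1.
  assert (y ^ (p + q) <> 0) by (apply pow_nonzero; lra).
  change (y ^ S (p + q)) with (y * y ^ (p + q)).
  set (F1 := fsum _ p). set (F2 := fsum _ q).
  field. repeat split; lra.
Qed.

Lemma alternating_partial_fractions x y c : x <> 0 -> y <> 0 -> x + y <> 0 ->
  let N := S (2 * c) in
  / x * / (x + y) * / y ^ (S N) + / y * / (x + y) * / x ^ (S N) =
  fsum (fun j => (-1) ^ j * / x ^ (j + 2) * / y ^ (S N - j)) N.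
Proof.
  intros Hx Hy Hxy N.
  transitivity (/ x ^ 2 * / y ^ (S N) * fsum (fun j => (- y / x) ^ j) N).
  2:{ rewrite <- fsum_scal. apply fsum_ext; intros j Hj.
      rewrite pow_div_distr by lra. replace (- y) with (-1 * y) by ring.
      rewrite Rpow_mult_distr.
      replace (y ^ (S N)) with (y ^ (S N - j) * y ^ j) by (rewrite <- pow_add; f_equal; lia).
      rewrite pow_add.
      assert (y ^ (S N - j) <> 0) by (apply pow_nonzero; lra).
      assert (y ^ j <> 0) by (apply pow_nonzero; lra).
      assert (x ^ j <> 0) by (apply pow_nonzero; lra).
      field; repeat split; auto; lra. }
  assert (E : fsum (fun j => (- y / x) ^ j) N = (1 - (- y / x) ^ N) * (x / (x + y))).
  { unfold N. rewrite <- fsum_geom. field. lra. }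
  rewrite E, pow_div_distr by lra.
  replace (- y) with (-1 * y) by ring. rewrite Rpow_mult_distr.
  assert (HN : (-1) ^ N = -1) by (unfold N; apply pow_1_odd). rewrite HN.
  assert (x ^ N <> 0) by (apply pow_nonzero; lra).
  assert (y ^ N <> 0) by (apply pow_nonzero; lra).
  change (y ^ S N) with (y * y ^ N). change (x ^ S N) with (x * x ^ N).
  change (x ^ 2) with (x * (x * 1)).
  field. repeat split; lra.
Qed.

(** * Truncations of lambda and sigma *)

Definition oddR (k : nat) : R := 2 * INR k + 1.

Lemma oddR_ge1 k : 1 <= oddR k.
Proof. unfold oddR. pose proof (pos_INR k). lra. Qed.

Lemma oddR_pos k : 0 < oddR k.
Proof. pose proof (oddR_ge1 k). lra. Qed.

Lemma oddR_inj k l : k <> l -> oddR k <> oddR l.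
Proof. intros H E. unfold oddR in E. apply H. apply INR_eq. lra. Qed.

Lemma INR_odd m : INR (2 * m + 1) = oddR m.
Proof. unfold oddR. rewrite plus_INR, mult_INR. simpl. lra. Qed.

Lemma inv_pow_pos a n : 0 < a -> 0 < / a ^ n.
Proof. intros. apply Rinv_0_lt_compat, pow_lt; lra. Qed.

Lemma inv_pow_le a b n : 0 < a -> a <= b -> / b ^ n <= / a ^ n.
Proof. intros. apply Rinv_le_contravar. apply pow_lt; lra. apply pow_incr; lra. Qed.

Lemma inv_oddR_pow_le k s t : (s <= t)%nat -> / oddR k ^ t <= / oddR k ^ s.
Proof.
  intros H. apply Rinv_le_contravar; [apply pow_lt, oddR_pos|].
  apply Rle_pow; auto. apply oddR_ge1.
Qed.

Definition lam_trunc (M s : nat) : R := fsum (fun k => / oddR k ^ s) M.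

Lemma lam_trunc_nonneg M s : 0 <= lam_trunc M s.
Proof. apply fsum_nonneg. intros; left; apply inv_pow_pos, oddR_pos. Qed.

Lemma lam_trunc_2_le M : lam_trunc M 2 <= 2 - 2 / (INR M + 1).
Proof.
  induction M; [unfold lam_trunc; simpl; lra|].
  unfold lam_trunc in *. rewrite fsum_Sr, S_INR.
  pose proof (pos_INR M).
  assert (/ oddR M ^ 2 <= 2 / (INR M + 1) - 2 / (INR M + 1 + 1)).
  { replace (2 / (INR M + 1) - 2 / (INR M + 1 + 1)) with (/ ((INR M + 1) * (INR M + 2) / 2))
      by (field; lra).
    apply Rinv_le_contravar. apply Rdiv_lt_0_compat; [apply Rmult_lt_0_compat|]; lra.
    unfold oddR. simpl. nra. }
  lra.
Qed.

Lemma lam_trunc_le_2 M s : (2 <= s)%nat -> lam_trunc M s <= 2.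
Proof.
  intros H. apply Rle_trans with (lam_trunc M 2).
  - apply fsum_le; intros; apply inv_oddR_pow_le; auto.
  - pose proof (lam_trunc_2_le M). pose proof (pos_INR M).
    assert (0 < 2 / (INR M + 1)) by (apply Rdiv_lt_0_compat; lra). lra.
Qed.

Lemma is_lim_seq_lam_trunc s : (2 <= s)%nat -> is_lim_seq (fun M => lam_trunc M s) (lambda_d s).
Proof.
  intros Hs.
  destruct (ex_finite_lim_seq_incr (fun M => lam_trunc M s) 2) as [l Hl].
  - intros n. unfold lam_trunc. rewrite fsum_Sr.
    pose proof (inv_pow_pos (oddR n) s (oddR_pos n)). lra.
  - intros n. apply lam_trunc_le_2; auto.
  - replace (lambda_d s) with l; auto. symmetry.
    apply Series_fsum_lim. eapply is_lim_seq_ext; [|apply Hl].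
    intros n. apply fsum_ext. intros. rewrite INR_odd. auto.
Qed.

Definition sig_summand (t s k l : nat) : R := / oddR k ^ t * / (oddR k + oddR l) ^ s.

Lemma sig_summand_pos t s k l : 0 < sig_summand t s k l.
Proof.
  unfold sig_summand. pose proof (oddR_pos k). pose proof (oddR_pos l).
  apply Rmult_lt_0_compat; apply inv_pow_pos; lra.
Qed.

Definition sig_trunc (M t s : nat) : R := dsum M (sig_summand t s).

Definition sig_tri (M t s : nat) : R := fsum (fun k => fsum (sig_summand t s k) (M - k)) M.

Lemma sig_tri_mono M t s : sig_tri M t s <= sig_tri (S M) t s.
Proof.
  unfold sig_tri. rewrite !fsum_antidiag. apply fsum_le_len; auto.
  intros; apply fsum_nonneg; intros; left; apply sig_summand_pos.
Qed.

Lemma sig_tri_le_trunc M t s : sig_tri M t s <= sig_trunc M t s.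
Proof.
  apply fsum_le; intros k Hk. apply fsum_le_len; [intros; left; apply sig_summand_pos|lia].
Qed.

Lemma sig_trunc_le_tri M t s : sig_trunc M t s <= sig_tri (2 * M) t s.
Proof.
  apply Rle_trans with (fsum (fun k => fsum (sig_summand t s k) (2 * M - k)) M).
  - apply fsum_le; intros k Hk. apply fsum_le_len; [intros; left; apply sig_summand_pos|lia].
  - apply fsum_le_len; [|lia]. intros; apply fsum_nonneg; intros; left; apply sig_summand_pos.
Qed.

Lemma sig_trunc_le_lam M t s : sig_trunc M t s <= lam_trunc M t * lam_trunc M s.
Proof.
  unfold sig_trunc, lam_trunc. rewrite <- dsum_mul. apply fsum_le; intros k _. apply fsum_le; intros l _.
  apply Rmult_le_compat_l; [left; apply inv_pow_pos, oddR_pos|].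
  apply inv_pow_le; [apply oddR_pos|]. pose proof (oddR_pos k); lra.
Qed.

Lemma S_odd_fsum t m : S_odd t (S m) = fsum (fun k => / oddR k ^ t) (S m).
Proof.
  unfold S_odd. rewrite sum_n_m_fsum. replace (S (S m) - 1)%nat with (S m) by lia.
  apply fsum_ext; intros k _. rewrite <- INR_odd. do 3 f_equal. lia.
Qed.

(* Uses [oddR k + oddR (m - k) = 2 (m + 1)]. *)
Lemma sigma_st_term t s m :
  S_odd t (S m) / INR (S m) ^ s = 2 ^ s * fsum (fun k => sig_summand t s k (m - k)%nat) (S m).
Proof.
  rewrite S_odd_fsum. unfold Rdiv. rewrite Rmult_comm, <- fsum_scal, <- fsum_scal.
  apply fsum_ext; intros k Hk. unfold sig_summand.
  replace (oddR k + oddR (m - k)) with (2 * INR (S m))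
    by (unfold oddR; rewrite minus_INR, S_INR by lia; ring).
  rewrite Rpow_mult_distr.
  assert (2 ^ s <> 0) by (apply pow_nonzero; lra).
  assert (INR (S m) ^ s <> 0) by (apply pow_nonzero; rewrite S_INR; pose proof (pos_INR m); lra).
  assert (oddR k ^ t <> 0) by (apply pow_nonzero; pose proof (oddR_pos k); lra).
  field; auto.
Qed.

Lemma is_lim_seq_sig_trunc t s : (2 <= t)%nat -> (2 <= s)%nat ->
  is_lim_seq (fun M => sig_trunc M t s) (sigma_st s t / 2 ^ s).
Proof.
  intros Ht Hs.
  destruct (ex_finite_lim_seq_incr (fun M => sig_tri M t s) 4) as [l Hl].
  - intros; apply sig_tri_mono.
  - intros n. eapply Rle_trans; [apply sig_tri_le_trunc|]. eapply Rle_trans; [apply sig_trunc_le_lam|].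
    pose proof (lam_trunc_le_2 n t Ht); pose proof (lam_trunc_le_2 n s Hs).
    pose proof (lam_trunc_nonneg n t); pose proof (lam_trunc_nonneg n s). nra.
  - assert (E : sigma_st s t = 2 ^ s * l).
    { apply Series_fsum_lim.
      eapply is_lim_seq_ext; [|apply (is_lim_seq_scal_l' _ (2 ^ s) l Hl)].
      intros n. simpl. unfold sig_tri. rewrite fsum_antidiag, <- fsum_scal.
      apply fsum_ext; intros. rewrite sigma_st_term. auto. }
    replace (sigma_st s t / 2 ^ s) with l by (rewrite E; field; apply pow_nonzero; lra).
    apply is_lim_seq_le_le with (fun M => sig_tri M t s) (fun M => sig_tri (2 * M) t s).
    + intros; split; [apply sig_tri_le_trunc|apply sig_trunc_le_tri].
    + auto.
    + apply (is_lim_seq_subseq (fun M => sig_tri M t s) l (fun n => 2 * n)%nat); auto.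
      apply eventually_subseq. intros; lia.
Qed.

Lemma dsum_lam_trunc M c s t :
  dsum M (fun k l => c * / oddR k ^ s * / oddR l ^ t) = c * (lam_trunc M s * lam_trunc M t).
Proof. unfold lam_trunc. rewrite <- dsum_mul, <- dsum_scal. apply dsum_ext; intros; ring. Qed.

Lemma dsum_sig_trunc M c t s :
  dsum M (fun k l => c * / (oddR k + oddR l) ^ s * / oddR l ^ t) = c * sig_trunc M t s.
Proof.
  rewrite <- dsum_swap. unfold sig_trunc. rewrite <- dsum_scal.
  apply dsum_ext; intros. unfold sig_summand. rewrite Rplus_comm. ring.
Qed.

Lemma sig_trunc_decomposition a b M :
  let p := S (2 * a) in let q := S (2 * b) in
  sig_trunc M (S p) (S q) =
  fsum (fun j => (-1) ^ j * INR (choose (q + j) j) * (lam_trunc M (S p - j) * lam_trunc M (S q + j))) p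
  + fsum (fun i => INR (choose (p + i) i) * sig_trunc M (S p + i) (S q - i)) q
  - INR (choose (p + q) q) *
      (/ 2 * fsum (fun j => (-1) ^ j * (lam_trunc M (j + 2) * lam_trunc M (p + q - j))) (p + q - 1)).
Proof.
  intros p q.
  assert (Hpos : forall k l, oddR k <> 0 /\ oddR l <> 0 /\ oddR k + oddR l <> 0).
  { intros k l. pose proof (oddR_pos k). pose proof (oddR_pos l). lra. }
  transitivity (dsum M (fun k l =>
    fsum (fun j => (-1) ^ j * INR (choose (q + j) j) * / oddR k ^ (S p - j) * / oddR l ^ (S q + j)) p
  + fsum (fun i => INR (choose (p + i) i) * / (oddR k + oddR l) ^ (S q - i) * / oddR l ^ (S p + i)) q
  - INR (choose (p + q) q) * (/ oddR k * / (oddR k + oddR l) * / oddR l ^ (p + q)))).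
  { apply dsum_ext; intros k l. destruct (Hpos k l) as (? & ? & ?). now apply partial_fractions_odd. }
  rewrite dsum_minus, dsum_plus, dsum_scal, !dsum_fsum.
  f_equal; [f_equal|f_equal].
  - apply fsum_ext; intros j _. apply dsum_lam_trunc.
  - apply fsum_ext; intros i _. apply dsum_sig_trunc.
  - set (T := fun k l => / oddR k * / (oddR k + oddR l) * / oddR l ^ (p + q)).
    replace (dsum M T) with (/ 2 * (dsum M T + dsum M (fun k l => T l k))) by (rewrite dsum_swap; lra).
    rewrite <- dsum_plus. f_equal.
    rewrite (fsum_ext _ (fun j => dsum M (fun k l => (-1) ^ j * / oddR k ^ (j + 2) * / oddR l ^ (p + q - j))))
      by (intros; symmetry; apply dsum_lam_trunc).
    rewrite <- dsum_fsum.
    apply dsum_ext; intros k l. unfold T.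
    replace (p + q)%nat with (S (S (2 * (a + b)))) by (unfold p, q; lia).
    replace (S (S (2 * (a + b))) - 1)%nat with (S (2 * (a + b))) by lia.
    rewrite (Rplus_comm (oddR l) (oddR k)).
    destruct (Hpos k l) as (Hk & Hl & Hkl).
    apply (alternating_partial_fractions _ _ (a + b) Hk Hl Hkl).
Qed.

(* The [i = 0] term of the second sum of [sig_trunc_decomposition] is the left-hand side itself. *)
Lemma sigma_lambda_relation a b :
  let p := S (2 * a) in let q := S (2 * b) in
  fsum (fun j => (-1) ^ j * INR (choose (q + j) j) * (lambda_d (S p - j) * lambda_d (S q + j))) p
  + fsum (fun i => INR (choose (p + S i) (S i)) * (sigma_st (S q - S i) (S p + S i) / 2 ^ (S q - S i)))
      (2 * b)
  = INR (choose (p + q) q) *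
      (/ 2 * fsum (fun j => (-1) ^ j * (lambda_d (j + 2) * lambda_d (p + q - j))) (p + q - 1)).
Proof.
  cbv zeta. apply Rminus_diag_uniq.
  apply (is_lim_seq_ext_eq (fun M =>
      fsum (fun j => (-1) ^ j * INR (choose (S (2 * b) + j) j) *
        (lam_trunc M (S (S (2 * a)) - j) * lam_trunc M (S (S (2 * b)) + j))) (S (2 * a))
    + fsum (fun i => INR (choose (S (2 * a) + S i) (S i)) *
        sig_trunc M (S (S (2 * a)) + S i) (S (S (2 * b)) - S i)) (2 * b)
    - INR (choose (S (2 * a) + S (2 * b)) (S (2 * b))) *
        (/ 2 * fsum (fun j => (-1) ^ j *
           (lam_trunc M (j + 2) * lam_trunc M (S (2 * a) + S (2 * b) - j))) (S (2 * a) + S (2 * b) - 1)))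
    (fun _ => 0)); [intros M| |apply is_lim_seq_const].
  - pose proof (sig_trunc_decomposition a b M) as H. cbv zeta in H.
    rewrite (fsum_Sl _ (2 * b)), !Nat.add_0_r, choose_n_0, Nat.sub_0_r, INR_1 in H.
    lra.
  - assert (Hlam : forall s t, (2 <= s)%nat -> (2 <= t)%nat -> forall c,
      is_lim_seq (fun M => c * (lam_trunc M s * lam_trunc M t)) (c * (lambda_d s * lambda_d t))).
    { intros. apply is_lim_seq_scal_l', is_lim_seq_mult'; apply is_lim_seq_lam_trunc; auto. }
    apply is_lim_seq_minus'; [apply is_lim_seq_plus'|apply is_lim_seq_scal_l', is_lim_seq_scal_l'];
      apply is_lim_seq_fsum; intros j Hj.
    + apply Hlam; lia.
    + apply is_lim_seq_scal_l', is_lim_seq_sig_trunc; lia.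
    + apply Hlam; lia.
Qed.

(** * Even convolutions of lambda *)

Lemma inv_pow_even_convolution x y n : x <> 0 -> y <> 0 -> x ^ 2 <> y ^ 2 ->
  fsum (fun j => / x ^ (2 * j + 2) * / y ^ (2 * n + 2 - 2 * j)) (S n) =
  / y ^ (2 * n + 2) * / (x ^ 2 - y ^ 2) + / x ^ (2 * n + 2) * / (y ^ 2 - x ^ 2).
Proof.
  intros Hx Hy Hxy.
  assert (Hx2 : x ^ 2 <> 0) by (apply pow_nonzero; lra).
  assert (Hy2 : y ^ 2 <> 0) by (apply pow_nonzero; lra).
  set (u := / x ^ 2). set (t := / y ^ 2).
  assert (Hu : u <> 0) by (apply Rinv_neq_0_compat; auto).
  assert (Ht : t <> 0) by (apply Rinv_neq_0_compat; auto).
  assert (Htu : t - u <> 0).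
  { unfold t, u. intro H. apply Hxy.
    rewrite <- (Rinv_inv (x ^ 2)), <- (Rinv_inv (y ^ 2)). f_equal. lra. }
  transitivity (u * t * fsum (fun j => u ^ j * t ^ (n - j)) (S n)).
  - rewrite <- fsum_scal. apply fsum_ext; intros j Hj.
    unfold u, t. rewrite <- !pow_inv, <- !pow_mult.
    replace (2 * j + 2)%nat with (2 * (S j))%nat by lia.
    replace (2 * n + 2 - 2 * j)%nat with (2 * (S (n - j)))%nat by lia.
    rewrite !pow_mult. simpl. ring.
  - assert (E : fsum (fun j => u ^ j * t ^ (n - j)) (S n) = (t ^ S n - u ^ S n) / (t - u)).
    { rewrite <- fsum_pow_diff. field; auto. }
    rewrite E.
    replace (/ y ^ (2 * n + 2)) with (t ^ S n)
      by (unfold t; rewrite pow_inv, <- pow_mult; do 2 f_equal; lia).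
    replace (/ x ^ (2 * n + 2)) with (u ^ S n)
      by (unfold u; rewrite pow_inv, <- pow_mult; do 2 f_equal; lia).
    replace (x ^ 2) with (/ u) by (unfold u; rewrite Rinv_inv; auto).
    replace (y ^ 2) with (/ t) by (unfold t; rewrite Rinv_inv; auto).
    field. repeat split; try lra.
Qed.

Lemma inv_pow_even_convolution_diag x n : x <> 0 ->
  fsum (fun j => / x ^ (2 * j + 2) * / x ^ (2 * n + 2 - 2 * j)) (S n) = (INR n + 1) * / x ^ (2 * n + 4).
Proof.
  intros Hx.
  transitivity (fsum (fun _ => / x ^ (2 * n + 4)) (S n)).
  - apply fsum_ext; intros j Hj. rewrite <- Rinv_mult, <- pow_add. do 2 f_equal. lia.
  - rewrite fsum_const, S_INR. auto.
Qed.

Lemma oddR_sq_neq k l : k <> l -> oddR k ^ 2 <> oddR l ^ 2.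
Proof.
  intros Hkl E. apply (oddR_inj k l Hkl).
  pose proof (oddR_pos k). pose proof (oddR_pos l).
  simpl in E. nra.
Qed.

Definition half_harmonic (n : nat) : R := fsum (fun j => / (2 * (INR j + 1))) n.

Lemma half_harmonic_mono a b : (a <= b)%nat -> half_harmonic a <= half_harmonic b.
Proof.
  intros H. apply fsum_le_len; auto. intros. left. apply Rinv_0_lt_compat.
  pose proof (pos_INR k); lra.
Qed.

Lemma half_harmonic_add_le a d : half_harmonic (a + d) - half_harmonic a <= INR d * / (2 * (INR a + 1)).
Proof.
  unfold half_harmonic. rewrite fsum_add_len, <- fsum_const.
  assert (fsum (fun k => / (2 * (INR (a + k) + 1))) d <= fsum (fun _ => / (2 * (INR a + 1))) d).
  { apply fsum_le; intros k _. apply Rinv_le_contravar.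
    - pose proof (pos_INR a); lra.
    - rewrite plus_INR. pose proof (pos_INR k); lra. }
  lra.
Qed.

Lemma fsum_inv_oddR_sub l M : (l < M)%nat ->
  fsum (fun k => if Nat.eq_dec k l then 0 else / (oddR k - oddR l)) M
  = half_harmonic (M - 1 - l) - half_harmonic l.
Proof.
  intros H. replace M with (l + 1 + (M - 1 - l))%nat at 1 by lia.
  rewrite !fsum_add_len. simpl.
  destruct (Nat.eq_dec (l + 0) l); [|lia].
  rewrite (fsum_ext _ (fun k => - / (2 * (INR (l - 1 - k) + 1))) l).
  2:{ intros k Hk. destruct (Nat.eq_dec k l); [lia|].
      unfold oddR. rewrite !minus_INR by lia. simpl.
      assert (INR k < INR l) by (apply lt_INR; lia).
      field. repeat split; lra. }
  rewrite (fsum_rev (fun j => - / (2 * (INR j + 1)))).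
  rewrite (fsum_ext _ (fun j => / (2 * (INR j + 1))) (M - 1 - l)).
  2:{ intros k Hk. destruct (Nat.eq_dec (l + 1 + k) l); [lia|].
      unfold oddR. rewrite !plus_INR. simpl. field. pose proof (pos_INR k). lra. }
  unfold half_harmonic. rewrite (fsum_ext _ (fun j => -1 * / (2 * (INR j + 1))) l) by (intros; ring).
  rewrite fsum_scal. ring.
Qed.

Lemma fsum_inv_oddR_add l M :
  fsum (fun k => / (oddR k + oddR l)) M = half_harmonic (l + M) - half_harmonic l.
Proof.
  unfold half_harmonic. rewrite fsum_add_len.
  rewrite (fsum_ext _ (fun k => / (2 * (INR (l + k) + 1))) M); [ring|].
  intros. unfold oddR. rewrite plus_INR. f_equal. ring.
Qed.

(* The summand at [(k, l)] of the even convolution of truncated lambda values is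
   [conv_part n k l + conv_part n l k], by [inv_pow_even_convolution] off the diagonal. *)
Definition conv_part (n k l : nat) : R :=
  if Nat.eq_dec k l then (INR n + 1) / 2 * / oddR k ^ (2 * n + 4)
  else / oddR l ^ (2 * n + 2) * / (oddR k ^ 2 - oddR l ^ 2).

(* [1 / (x^2 - y^2) = (1 / (x - y) - 1 / (x + y)) / (2 y)], and both sums telescope to
   half-harmonic numbers. *)
Lemma fsum_conv_part n l M : (l < M)%nat ->
  fsum (fun k => conv_part n k l) M =
  ((INR n + 1) / 2 + / 4) * / oddR l ^ (2 * n + 4)
  + / 2 * / oddR l ^ (2 * n + 3) * (half_harmonic (M - 1 - l) - half_harmonic (l + M)).
Proof.
  intros Hl. set (y := oddR l). assert (Hy : 0 < y) by apply oddR_pos.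
  assert (HY : y ^ (2 * n + 2) <> 0) by (apply pow_nonzero; lra).
  set (c0 := ((INR n + 1) / 2 + / 4) * / y ^ (2 * n + 4)).
  set (c1 := / y ^ (2 * n + 2) * / (2 * y)).
  transitivity (fsum (fun k => (if Nat.eq_dec k l then c0 else 0)
     + c1 * ((if Nat.eq_dec k l then 0 else / (oddR k - oddR l)) - / (oddR k + oddR l))) M).
  - apply fsum_ext; intros k Hk. unfold conv_part.
    destruct (Nat.eq_dec k l) as [->|Hkl].
    + fold y. unfold c0, c1.
      replace (2 * n + 4)%nat with (2 + (2 * n + 2))%nat by lia. rewrite pow_add.
      set (Y := y ^ (2 * n + 2)) in *. change (y ^ 2) with (y * (y * 1)).
      field. split; auto; lra.
    + unfold c1. fold y. pose proof (oddR_pos k). pose proof (oddR_inj k l Hkl).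
      pose proof (oddR_sq_neq k l Hkl). fold y in H0, H1.
      set (Y := y ^ (2 * n + 2)) in *. change (oddR k ^ 2) with (oddR k * (oddR k * 1)) in *.
      change (y ^ 2) with (y * (y * 1)) in *.
      field. repeat split; lra.
  - rewrite fsum_plus, fsum_indicator, fsum_scal, fsum_minus, fsum_inv_oddR_sub, fsum_inv_oddR_add
      by auto.
    unfold c0, c1. fold y.
    replace (2 * n + 3)%nat with (S (2 * n + 2)) by lia.
    replace (2 * n + 4)%nat with (S (S (2 * n + 2))) by lia.
    set (Y := y ^ (2 * n + 2)) in *. change (y ^ S (S (2 * n + 2))) with (y * (y * Y)).
    change (y ^ S (2 * n + 2)) with (y * Y).
    field. split; lra.
Qed.

Definition conv_error (n M : nat) : R :=
  fsum (fun l => / oddR l ^ (2 * n + 3) * (half_harmonic (l + M) - half_harmonic (M - 1 - l))) M.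

Lemma lam_trunc_even_convolution n M :
  fsum (fun j => lam_trunc M (2 * j + 2) * lam_trunc M (2 * n + 2 - 2 * j)) (S n) =
  (INR n + 3 / 2) * lam_trunc M (2 * n + 4) - conv_error n M.
Proof.
  transitivity (dsum M (fun k l =>
    fsum (fun j => / oddR k ^ (2 * j + 2) * / oddR l ^ (2 * n + 2 - 2 * j)) (S n))).
  { rewrite dsum_fsum. apply fsum_ext; intros j _. rewrite <- (Rmult_1_l (lam_trunc M _ * _)).
    rewrite <- dsum_lam_trunc. apply dsum_ext; intros. ring. }
  transitivity (dsum M (fun k l => conv_part n k l + conv_part n l k)).
  { apply dsum_ext; intros k l. pose proof (oddR_pos k). pose proof (oddR_pos l). unfold conv_part.
    destruct (Nat.eq_dec k l) as [<-|Hkl].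
    - destruct (Nat.eq_dec k k) as [_|C]; [|lia].
      rewrite inv_pow_even_convolution_diag by lra. field. apply pow_nonzero; lra.
    - destruct (Nat.eq_dec l k); [lia|].
      apply inv_pow_even_convolution; auto using oddR_sq_neq; lra. }
  rewrite dsum_plus, (dsum_swap M (conv_part n)).
  unfold dsum. rewrite (fsum_swap (conv_part n)), (fsum_ext _ _ M (fun l Hl => fsum_conv_part n l M Hl)).
  unfold conv_error, lam_trunc. rewrite fsum_plus, fsum_scal.
  rewrite (fsum_ext (fun l => _ * _ * (_ - _)) (fun l => - / 2 * (/ oddR l ^ (2 * n + 3) *
    (half_harmonic (l + M) - half_harmonic (M - 1 - l))))) by (intros; ring).
  rewrite fsum_scal. field.
Qed.

Lemma conv_error_nonneg n M : 0 <= conv_error n M.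
Proof.
  apply fsum_nonneg. intros l.
  destruct (le_lt_dec (M - 1 - l) (l + M)); [|lia].
  apply Rmult_le_pos; [left; apply inv_pow_pos, oddR_pos|].
  pose proof (half_harmonic_mono _ _ l0). lra.
Qed.

Lemma inv_sq_mul_inv_le x D : 1 <= x -> 2 <= D ->
  / x ^ 2 * / D <= / (x + D) * / x ^ 2 + 2 * / (x + D) ^ 2.
Proof.
  intros Hx HD. set (N := x + D).
  assert (E : / x ^ 2 * / D = / N * / x ^ 2 + / N ^ 2 * / x + / N ^ 2 * / D)
    by (unfold N; field; lra).
  rewrite E.
  assert (0 < / N ^ 2) by (apply inv_pow_pos; unfold N; lra).
  assert (/ x <= 1) by (rewrite <- Rinv_1; apply Rinv_le_contravar; lra).
  assert (/ D <= 1) by (rewrite <- Rinv_1; apply Rinv_le_contravar; lra).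
  nra.
Qed.

Lemma conv_error_term_le n M l : (l < M)%nat ->
  / oddR l ^ (2 * n + 3) * (half_harmonic (l + M) - half_harmonic (M - 1 - l))
  <= / (2 * INR M + 1) * / oddR l ^ 2 + 2 * / (2 * INR M + 1) ^ 2.
Proof.
  intros Hl.
  assert (Hlt : INR l + 1 <= INR M) by (rewrite <- S_INR; apply le_INR; lia).
  assert (Hok := oddR_ge1 l).
  assert (Hd : half_harmonic (l + M) - half_harmonic (M - 1 - l) <= oddR l * / (2 * (INR M - INR l))).
  { pose proof (half_harmonic_add_le (M - 1 - l) (2 * l + 1)) as H.
    replace (M - 1 - l + (2 * l + 1))%nat with (l + M)%nat in H by lia.
    rewrite INR_odd in H. replace (INR (M - 1 - l) + 1) with (INR M - INR l) in H; auto.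
    rewrite !minus_INR by lia. simpl. lra. }
  apply Rle_trans with (/ oddR l ^ 2 * / (2 * (INR M - INR l))).
  - apply Rle_trans with (/ oddR l ^ (2 * n + 3) * (oddR l * / (2 * (INR M - INR l)))).
    + apply Rmult_le_compat_l; auto. left; apply inv_pow_pos; lra.
    + replace (/ oddR l ^ (2 * n + 3) * (oddR l * / (2 * (INR M - INR l)))) with
        (/ oddR l ^ (2 * n + 2) * / (2 * (INR M - INR l))).
      * apply Rmult_le_compat_r; [left; apply Rinv_0_lt_compat; lra|].
        apply inv_oddR_pow_le. lia.
      * replace (2 * n + 3)%nat with (S (2 * n + 2)) by lia.
        assert (oddR l ^ (2 * n + 2) <> 0) by (apply pow_nonzero; lra).
        change (oddR l ^ S (2 * n + 2)) with (oddR l * oddR l ^ (2 * n + 2)).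
        field. split; lra.
  - replace (2 * INR M + 1) with (oddR l + 2 * (INR M - INR l)) by (unfold oddR; ring).
    apply inv_sq_mul_inv_le; lra.
Qed.

Lemma conv_error_le n M : conv_error n M <= 3 * / INR (S M).
Proof.
  set (N := 2 * INR M + 1).
  assert (HM := pos_INR M).
  apply Rle_trans with (fsum (fun l => / N * / oddR l ^ 2 + 2 * / N ^ 2) M).
  { apply fsum_le; intros l Hl. apply conv_error_term_le; auto. }
  rewrite fsum_plus, fsum_scal, fsum_const, S_INR.
  change (fsum (fun k => / oddR k ^ 2) M) with (lam_trunc M 2).
  pose proof (lam_trunc_le_2 M 2 (le_n 2)). pose proof (lam_trunc_nonneg M 2).
  assert (0 < / N) by (apply Rinv_0_lt_compat; unfold N; lra).
  assert (INR M * (2 * / N ^ 2) <= / N).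
  { replace (INR M * (2 * / N ^ 2)) with ((2 * INR M / N) * / N) by (field; unfold N; lra).
    rewrite <- (Rmult_1_l (/ N)) at 2. apply Rmult_le_compat_r; [lra|].
    apply Rle_div_l; unfold N; lra. }
  assert (/ N <= / (INR M + 1)) by (apply Rinv_le_contravar; unfold N; lra).
  nra.
Qed.

Lemma is_lim_seq_conv_error n : is_lim_seq (conv_error n) 0.
Proof.
  apply is_lim_seq_le_le with (fun _ => 0) (fun M => 3 * / INR (S M)).
  - intros M. split; [apply conv_error_nonneg|apply conv_error_le].
  - apply is_lim_seq_const.
  - rewrite <- (Rmult_0_r 3). apply is_lim_seq_scal_l'.
    apply (is_lim_seq_incr_1 (fun M => / INR M)).
    replace (Finite 0) with (Rbar_inv p_infty) by auto.
    apply is_lim_seq_inv; [apply is_lim_seq_INR|discriminate].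
Qed.

Lemma lambda_even_convolution n :
  fsum (fun j => lambda_d (2 * j + 2) * lambda_d (2 * n + 2 - 2 * j)) (S n) =
  (INR n + 3 / 2) * lambda_d (2 * n + 4).
Proof.
  rewrite <- (Rminus_0_r (_ * lambda_d _)).
  apply (is_lim_seq_ext_eq _ _ _ _ (lam_trunc_even_convolution n)).
  - apply (is_lim_seq_fsum (fun j M => lam_trunc M (2 * j + 2) * lam_trunc M (2 * n + 2 - 2 * j))).
    intros j Hj. apply is_lim_seq_mult'; apply is_lim_seq_lam_trunc; lia.
  - apply is_lim_seq_minus'; [|apply is_lim_seq_conv_error].
    apply is_lim_seq_scal_l', is_lim_seq_lam_trunc; lia.
Qed.

(** * The relation between sigma and lambda *)

Lemma sigma_lambda_identity a b :
  let p := S (2 * a) in let q := S (2 * b) in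
  fsum (fun j => (-1) ^ j * INR (choose (q + j) j) * (lambda_d (S p - j) * lambda_d (S q + j))) p
  + fsum (fun i => INR (choose (p + S i) (S i)) * (sigma_st (S q - S i) (S p + S i) / 2 ^ (S q - S i)))
      (2 * b)
  = INR (choose (p + q) q) / 2 *
      ((INR (a + b) + 3 / 2) * lambda_d (2 * (a + b) + 4)
       - fsum (fun k => lambda_d (2 * k + 3) * lambda_d (2 * (a + b) + 1 - 2 * k)) (a + b)).
Proof.
  cbv zeta. rewrite sigma_lambda_relation.
  replace (S (2 * a) + S (2 * b) - 1)%nat with (S (2 * (a + b))) by lia.
  rewrite fsum_alternating, <- lambda_even_convolution.
  unfold Rdiv. rewrite Rmult_assoc. do 2 f_equal.
  f_equal; apply fsum_ext; intros; do 2 f_equal; lia.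
Qed.

Lemma powerRZ_two_sub3 v : (1 <= v)%nat -> powerRZ 2 (Z.of_nat (2 * v) - 3) = 2 ^ (2 * v - 1) / 4.
Proof.
  intros Hv.
  assert (E : powerRZ 2 (Z.of_nat (2 * v) - 3) * powerRZ 2 2 = 2 ^ (2 * v - 1)).
  { rewrite <- powerRZ_add, pow_powerRZ by lra. f_equal. lia. }
  rewrite <- E. simpl. field.
Qed.

Lemma sum_sigma_terms a b :
  sum_n_m (fun i => 2 ^ (i - 1) * binom (2 * S a + i - 1) i * sigma_st (2 * S b - i) (2 * S a + i))
    1 (2 * S b - 2)
  = 2 ^ (2 * S b - 1) * fsum (fun i => INR (choose (S (2 * a) + S i) (S i)) *
      (sigma_st (S (S (2 * b)) - S i) (S (S (2 * a)) + S i) / 2 ^ (S (S (2 * b)) - S i))) (2 * b).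
Proof.
  rewrite sum_n_m_fsum. replace (S (2 * S b - 2) - 1)%nat with (2 * b)%nat by lia.
  rewrite <- fsum_scal. apply fsum_ext; intros k Hk.
  unfold binom. rewrite C_choose by lia.
  replace (1 + k)%nat with (S k) by lia.
  replace (2 * S a + S k - 1)%nat with (S (2 * a) + S k)%nat by lia.
  replace (2 * S b - S k)%nat with (S (S (2 * b)) - S k)%nat by lia.
  replace (2 * S a + S k)%nat with (S (S (2 * a)) + S k)%nat by lia.
  replace (2 * S b - 1)%nat with (S k - 1 + (S (S (2 * b)) - S k))%nat by lia.
  rewrite pow_add. assert (2 ^ (S (S (2 * b)) - S k) <> 0) by (apply pow_nonzero; lra).
  field; auto.
Qed.

Lemma sum_lambda_alternating a b :
  sum_n_m (fun j => (-1) ^ j * binom (2 * S b + j - 1) j * lambda_d (2 * S b + j) * lambda_d (2 * S a - j))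
    0 (2 * S a - 2)
  = fsum (fun j => (-1) ^ j * INR (choose (S (2 * b) + j) j) *
      (lambda_d (S (S (2 * a)) - j) * lambda_d (S (S (2 * b)) + j))) (S (2 * a)).
Proof.
  rewrite sum_n_m_fsum. replace (S (2 * S a - 2) - 0)%nat with (S (2 * a)) by lia.
  apply fsum_ext; intros j Hj. unfold binom. rewrite C_choose by lia.
  replace (2 * S b + (0 + j) - 1)%nat with (S (2 * b) + j)%nat by lia.
  replace (2 * S b + (0 + j))%nat with (S (S (2 * b)) + j)%nat by lia.
  replace (2 * S a - (0 + j))%nat with (S (S (2 * a)) - j)%nat by lia.
  replace (0 + j)%nat with j by lia. ring.
Qed.

Lemma sum_lambda_odd a b :
  sum_n_m (fun j => lambda_d (2 * j + 1) * lambda_d (2 * S a + 2 * S b - 2 * j - 1)) 1 (S a + S b - 2)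
  = fsum (fun k => lambda_d (2 * k + 3) * lambda_d (2 * (a + b) + 1 - 2 * k)) (a + b).
Proof.
  rewrite sum_n_m_fsum. replace (S (S a + S b - 2) - 1)%nat with (a + b)%nat by lia.
  apply fsum_ext; intros k Hk. f_equal; f_equal; lia.
Qed.

Theorem mainTheorem12 (v r : nat) (hv : (1 <= v)%nat) (hr : (1 <= r)%nat) :
  sum_n_m (fun i : nat => 
      2 ^ (i - 1)%nat * binom (2 * r + i - 1)%nat i * sigma_st (2 * v - i)%nat (2 * r + i)%nat)
    1 (2 * v - 2)%nat
  + 2 ^ (2 * v - 1)%nat *
    sum_n_m (fun j : nat =>
      (-1) ^ j * binom (2 * v + j - 1)%nat j * lambda_d (2 * v + j)%nat * lambda_d (2 * r - j)%nat)
    0 (2 * r - 2)%nat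
  - powerRZ 2 (Z.of_nat (2 * v)%nat - 3) * binom (2 * v + 2 * r - 2)%nat (2 * v - 1)%nat
      * INR (2 * v + 2 * r - 1)%nat * lambda_d (2 * v + 2 * r)%nat
  + 2 ^ (2 * v - 2)%nat * binom (2 * v + 2 * r - 2)%nat (2 * v - 1)%nat *
    sum_n_m (fun j : nat =>
      lambda_d (2 * j + 1)%nat * lambda_d (2 * r + 2 * v - 2 * j - 1)%nat)
    1 (r + v - 2)%nat
  = 0.
Proof.
  destruct r as [|a]; [lia|]. destruct v as [|b]; [lia|].
  rewrite powerRZ_two_sub3, sum_sigma_terms, sum_lambda_alternating, sum_lambda_odd by lia.
  replace (binom (2 * S b + 2 * S a - 2) (2 * S b - 1))
    with (INR (choose (S (2 * a) + S (2 * b)) (S (2 * b))))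
    by (unfold binom; rewrite C_choose by lia; do 2 f_equal; lia).
  replace (INR (2 * S b + 2 * S a - 1)) with (2 * (INR (a + b) + 3 / 2))
    by ((replace (2 * S b + 2 * S a - 1)%nat with (2 * (a + b + 1) + 1)%nat by lia);
        rewrite INR_odd; unfold oddR; rewrite !plus_INR; change (INR 1) with 1; lra).
  replace (2 * S b + 2 * S a)%nat with (2 * (a + b) + 4)%nat by lia.
  replace (2 ^ (2 * S b - 2)) with (2 ^ (2 * S b - 1) / 2)
    by ((replace (2 * S b - 1)%nat with (S (2 * S b - 2)) by lia); simpl; field).
  pose proof (f_equal (Rmult (2 ^ (2 * S b - 1))) (sigma_lambda_identity a b)) as H.
  cbv zeta in H. lra.
Qed.
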